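(* Let $\widehat{\mathcal M}=(E_{2n}\cup\{q\},\widehat{\mathcal C})$ be an oriented matroid. Suppose there exist two distinct circuits $X,Y\in\widehat{\mathcal C}$ whose supports are complementary, with $X_q=Y_q=+$, such that for every $i\in[n]$ either $X_{s_i}Y_{t_i}=X_{t_i}Y_{s_i}=0$, or ($X_{s_i}=Y_{t_i}$ and $X_{t_i}=Y_{s_i}$). Then $\widehat{\mathcal M}$ is not a P-matroid extension.
   Context: An oriented matroid $(E,\mathcal C)$ is given by its circuits, signed sets $X\in\{-,0,+\}^E$ satisfying: (C0) the zero vector is not a circuit; (C1) $X\in\mathcal C\iff -X\in\mathcal C$; (C2) if $\underline X\subseteq\underline Y$ then $X=\pm Y$; (C3) for $X\neq -Y$ and $e$ with $X_e=+$, $Y_e=-$, there is a circuit $Z$ with $Z^+\subseteq(X^+\cup Y^+)\setminus\{e\}$ and $Z^-\subseteq(X^-\cup Y^-)\setminus\{e\}$. Here $\underline X=\{e:X_e\neq0\}$, $X^\pm=\{e:X_e=\pm\}$. A basis is an inclusion-maximal subset of $E$ containing no circuit support. $S=\{s_1,\dots,s_n\}$, $T=\{t_1,\dots,t_n\}$, $E_{2n}=S\cup T$, $q\notin E_{2n}$; a set is complementary if it contains no pair $\{s_i,t_i\}$. A circuit $X$ is sign-reversing if $X_{s_i}=-X_{t_i}$ for every $i$ with $\{s_i,t_i\}\subseteq\underline X$. A P-matroid is an oriented matroid on $E_{2n}$ in which $S$ is a basis and no circuit is sign-reversing. A P-matroid extension is an oriented matroid on $E_{2n}\cup\{q\}$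 whose circuits $X$ with $X_q=0$, restricted to $E_{2n}$, are exactly the circuits of a P-matroid. (In a P-matroid extension every complementary set of size $n$ is a basis.) *)

From HB Require Import structures.
From mathcomp Require Import all_boot.
Set Implicit Arguments. Unset Strict Implicit. Unset Printing Implicit Defensive.

Inductive sgn := Neg | Zer | Pos.

Definition sgn_to_ord (x : sgn) : 'I_3 :=
  match x with Neg => inord 0 | Zer => inord 1 | Pos => inord 2 end.
Definition sgn_of_ord (i : 'I_3) : sgn :=
  match val i with 0 => Neg | 1 => Zer | _ => Pos end.
Lemma sgn_to_ordK : cancel sgn_to_ord sgn_of_ord.
Proof. by case; rewrite /sgn_of_ord /= inordK. Qed.
HB.instance Definition _ := Finite.copy sgn (can_type sgn_to_ordK).

Definition sgn_opp (x : sgn) : sgn :=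
  match x with Neg => Pos | Zer => Zer | Pos => Neg end.

Section SignedSets.
Variable T : finType.
Definition signed := {ffun T -> sgn}.
Definition oppS (X : signed) : signed := [ffun e => sgn_opp (X e)].
Definition zeroS : signed := [ffun _ => Zer].
Definition supp (X : signed) : {set T} := [set e | X e != Zer].
Definition posS (X : signed) : {set T} := [set e | X e == Pos].
Definition negS (X : signed) : {set T} := [set e | X e == Neg].

Definition oriented_matroid (C : {set signed}) : Prop :=
  [/\ zeroS \notin C,
      (forall X, X \in C <-> oppS X \in C),
      (forall X Y, X \in C -> Y \in C -> supp X \subset supp Y ->
          X = Y \/ X = oppS Y) &
      (forall X Y e, X \in C -> Y \in C -> X <> oppS Y ->
          X e = Pos -> Y e = Neg ->
          exists2 Z, Z \in C &
            posS Z \subset (posS X :|: posS Y) :\ e /\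
            negS Z \subset (negS X :|: negS Y) :\ e)].

Definition indep (C : {set signed}) (B : {set T}) : Prop :=
  forall X, X \in C -> ~~ (supp X \subset B).
Definition is_basis (C : {set signed}) (B : {set T}) : Prop :=
  indep C B /\ (forall B' : {set T}, B \subset B' -> indep C B' -> B' = B).
End SignedSets.

Definition E2 (n : nat) := ('I_n * bool)%type.
Definition s_ (n : nat) (i : 'I_n) : E2 n := (i, false).
Definition t_ (n : nat) (i : 'I_n) : E2 n := (i, true).
Definition Sset (n : nat) : {set E2 n} := [set e | ~~ e.2].

Definition Eq (n : nat) := option (E2 n).
Definition qel (n : nat) : Eq n := None.
Definition sq (n : nat) (i : 'I_n) : Eq n := Some (s_ i).
Definition tq (n : nat) (i : 'I_n) : Eq n := Some (t_ i).

Definition complementary (n : nat) (A : {set Eq n}) : Prop :=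
  forall i : 'I_n, ~ (sq i \in A /\ tq i \in A).

Definition sign_reversing (n : nat) (X : signed (E2 n)) : Prop :=
  forall i : 'I_n, X (s_ i) != Zer -> X (t_ i) != Zer ->
    X (s_ i) = sgn_opp (X (t_ i)).

Definition P_matroid (n : nat) (C : {set signed (E2 n)}) : Prop :=
  [/\ oriented_matroid C, is_basis C (Sset n) &
      forall X, X \in C -> ~ sign_reversing X].

Definition restrE (n : nat) (X : signed (Eq n)) : signed (E2 n) :=
  [ffun e => X (Some e)].

Definition P_matroid_extension (n : nat) (C : {set signed (Eq n)}) : Prop :=
  oriented_matroid C /\
  P_matroid [set restrE X | X in C & X (qel n) == Zer].

From HB Require Import structures.
From mathcomp Require Import all_boot.
Set Implicit Arguments. Unset Strict Implicit. Unset Printing Implicit Defensive.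

(* Eliminating q between X and -Y yields a circuit Z avoiding q whose every
   nonzero sign is taken from X or from -Y.  On each pair {s_i, t_i} the
   hypotheses leave Z either vanishing somewhere or carrying opposite signs, so
   Z restricts to a sign-reversing circuit of the P-matroid. *)

Lemma sgn_oppK : involutive sgn_opp.
Proof. by case. Qed.

Lemma oppSK (T : finType) : involutive (@oppS T).
Proof. by move=> X; apply/ffunP => e; rewrite !ffunE sgn_oppK. Qed.

Lemma posS_sub_conformal (T : finType) (X Y Z : signed T) (e f : T) :
  posS Z \subset (posS X :|: posS Y) :\ e -> Z f = Pos ->
  f != e /\ (X f = Pos \/ Y f = Pos).
Proof.
move=> /subsetP/(_ f) + Zf; rewrite !inE Zf eqxx => /(_ isT) /andP[-> /orP].
by case=> /eqP; auto.
Qed.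

Lemma negS_sub_conformal (T : finType) (X Y Z : signed T) (e f : T) :
  negS Z \subset (negS X :|: negS Y) :\ e -> Z f = Neg ->
  f != e /\ (X f = Neg \/ Y f = Neg).
Proof.
move=> /subsetP/(_ f) + Zf; rewrite !inE Zf eqxx => /(_ isT) /andP[-> /orP].
by case=> /eqP; auto.
Qed.

Lemma circuit_elim_same_sign (T : finType) (C : {set signed T}) (X Y : signed T)
    (e : T) :
  oriented_matroid C -> X \in C -> Y \in C -> X <> Y -> X e = Pos -> Y e = Pos ->
  exists2 Z, Z \in C &
    Z e = Zer /\ forall f, [\/ Z f = Zer, Z f = X f | Z f = sgn_opp (Y f)].
Proof.
move=> [_ oppC _ elimC] CX CY XY Xe Ye.
have CoppY : oppS Y \in C by apply: (oppC Y).1.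
have [|||Z CZ [posZ negZ]] := elimC X (oppS Y) e CX CoppY; rewrite ?oppSK //.
  by rewrite ffunE Ye.
have signZ f : [\/ Z f = Zer, Z f = X f | Z f = sgn_opp (Y f)].
  case Zf: (Z f); [| by constructor 1 |].
  - have [_ [->|]] := negS_sub_conformal negZ Zf; first by constructor 2.
    by rewrite ffunE; case: (Y f) => // _; constructor 3.
  - have [_ [->|]] := posS_sub_conformal posZ Zf; first by constructor 2.
    by rewrite ffunE; case: (Y f) => // _; constructor 3.
exists Z => //; split=> //.
case Ze: (Z e) => //.
- by have [/eqP] := negS_sub_conformal negZ Ze.
- by have [/eqP] := posS_sub_conformal posZ Ze.
Qed.

Lemma complementary_suppP (n : nat) (X : signed (Eq n)) (i : 'I_n) :
  complementary (supp X) -> X (sq i) = Zer \/ X (tq i) = Zer.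
Proof.
move=> /(_ i); rewrite !inE => not_both.
case: (X (sq i) =P Zer) => [|/eqP Xs]; [by left | right].
by apply/eqP/negPn/negP => Xt; apply: not_both.
Qed.

Lemma sign_reversing_pair (xs xt ys yt zs zt : sgn) :
  xs = Zer \/ xt = Zer -> ys = Zer \/ yt = Zer ->
  (xs = Zer \/ yt = Zer) /\ (xt = Zer \/ ys = Zer) \/ xs = yt /\ xt = ys ->
  [\/ zs = Zer, zs = xs | zs = sgn_opp ys] ->
  [\/ zt = Zer, zt = xt | zt = sgn_opp yt] ->
  zs <> Zer -> zt <> Zer -> zs = sgn_opp zt.
Proof.
move=> cX cY hXY [->//|->|->] [->//|->|->];
  case: xs xt ys yt cX cY hXY => [] [] [] [] //=; intuition congruence.
Qed.

Theorem mainTheorem10 (n : nat) (C : {set signed (Eq n)}) :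
  oriented_matroid C ->
  forall X Y : signed (Eq n),
    X \in C -> Y \in C -> X <> Y ->
    complementary (supp X) -> complementary (supp Y) ->
    X (qel n) = Pos -> Y (qel n) = Pos ->
    (forall i : 'I_n,
        ((X (sq i) == Zer) || (Y (tq i) == Zer)) /\
        ((X (tq i) == Zer) || (Y (sq i) == Zer))
      \/ (X (sq i) = Y (tq i) /\ X (tq i) = Y (sq i))) ->
    ~ P_matroid_extension C.
Proof.
move=> omC X Y CX CY XY cX cY Xq Yq hXY [_ [_ _ no_sign_rev]].
have [Z CZ [Zq signZ]] := circuit_elim_same_sign omC CX CY XY Xq Yq.
apply: (no_sign_rev (restrE Z)).
  by apply/imsetP; exists Z; rewrite // inE CZ Zq eqxx.
move=> i; rewrite !ffunE => /eqP Zs /eqP Zt.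
apply: (sign_reversing_pair (complementary_suppP i cX)
          (complementary_suppP i cY) _ (signZ (sq i)) (signZ (tq i)) Zs Zt).
by case: (hXY i) => [[/orP[]/eqP + /orP[]/eqP]|]; auto.
Qed.
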